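(* Let $X$ be a $T_1$ space and $\mathcal C$ a pre-pseudogroup on $X$. Equip the morphism set $\mathrm{Mor}(\mathcal C^\star)=\coprod_{x,y\in X}\mathcal C_x^y\cong\coprod_{x\in X}\mathcal C_x(X)=E_{\mathcal C}$ with the topology of the étale space of the presheaf $\mathcal C(-,X)$ (generated by the sets $[f,U]=\{f_x: x\in U\}$ for open $U$ and $f\in\mathcal C(U,X)$), and equip the object set with the topology of $X$. Then $\mathcal C^\star$ is a topological étale groupoid over $X$: the source map $s(f_x)=x$ and the target map $t$ (with $t(\varphi)=y$ for $\varphi\in\mathcal C_x^y$) are local homeomorphisms, and the identity map $X\to E_{\mathcal C}$, the inversion $E_{\mathcal C}\to E_{\mathcal C}$ and the composition $E_{\mathcal C}\times_X E_{\mathcal C}\to E_{\mathcal C}$ are continuous.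
   Context: $X_{top}$ denotes the set of open subsets of $X$, regarded as a category with exactly one morphism $U\to V$ iff $U\subseteq V$. Let $\mathcal C$ be a small category with $\mathrm{Ob}(\mathcal C)=X_{top}$ containing $X_{top}$ as a subcategory (identity on objects). For each open $V$, $\mathcal C(-,V)$ is a presheaf of sets on $X$ (restriction along $U'\subseteq U$ = precomposition with the inclusion morphism). For $x\in X$ let $\mathcal C_x(V)=\operatorname{colim}_{U\ni x}\mathcal C(U,V)$ (germ of $f\in\mathcal C(U,V)$ at $x$ written $f_x$); postcomposition with inclusions makes this functorial in $V$, and for $y\in X$ let $\mathcal C_x^y=\lim_{V\ni y}\mathcal C_x(V)$ (limit over open neighbourhoods of $y$), with projections $\mathcal C_x^y\to\mathcal C_x(V)$. Composition in $\mathcal C$ induces $\mathcal C_y^z\times\mathcal C_x^y\to\mathcal C_x^z$: given $\varphi\in\mathcal C_x^y,\psi\in\mathcal C_y^z$ and open $W\ni z$, choose $g\in\mathcal C(V,W)$, $y\in V$, representing the component $\psi_W$, and $f\in\mathcal C(U,V)$ representing $\varphi_V$; the $W$-component of $\psi\circ\varphi$ is $(g\circ f)_x$. This defines a category $\mathcal C^\star$ with objects the points of $X$ and $\mathcal C^\star(x,y)=\mathcal C_x^y$. For $X$ a $T_1$ space, a pre-pseudogroup on $X$ is such a $\mathcal C$ satisfying: (1) $\mathrm{Ob}(\mathcal C)=\mathrm{Ob}(X_{top})$; (2) for every open $V$ and $x\in X$, the map $\coprod_{y\in V}\mathcal C_x^y\to\mathcal C_x(V)$ induced by the projections is a bijection;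 (3) $\mathcal C^\star$ is a groupoid. A topological groupoid over $X$ has object space $X$ and a topological morphism space with continuous structure maps; it is étale if source and target are local homeomorphisms. *)

From Stdlib Require Import Classical.

Set Implicit Arguments.
Unset Strict Implicit.

Definition topology (T : Type) := (T -> Prop) -> Prop.

Record is_topology (T : Type) (O : topology T) : Prop := {
  top_full  : O (fun _ => True);
  top_inter : forall A B, O A -> O B -> O (fun t => A t /\ B t);
  top_union : forall F : (T -> Prop) -> Prop,
      (forall A, F A -> O A) -> O (fun t => exists A, F A /\ A t)
}.

Record TopSpace (X : Type) := {
  xopen : topology X;
  xtop  : is_topology xopen
}.

Definition T1 (X : Type) (T : TopSpace X) : Prop :=
  forall x y : X, x <> y -> exists U, xopen T U /\ U x /\ ~ U y.

(* Topology generated by a family B of subsets (smallest topology containing B);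
   open sets are taken up to extensional equality of predicates. *)
Inductive gen_open (T : Type) (B : topology T) : topology T :=
  | go_basic : forall A, B A -> gen_open B A
  | go_full  : gen_open B (fun _ => True)
  | go_inter : forall A A', gen_open B A -> gen_open B A' ->
                 gen_open B (fun t => A t /\ A' t)
  | go_union : forall F : (T -> Prop) -> Prop,
                 (forall A, F A -> gen_open B A) ->
                 gen_open B (fun t => exists A, F A /\ A t).

Definition gen_top (T : Type) (B : topology T) : topology T :=
  fun A => exists A', gen_open B A' /\ forall t, A t <-> A' t.

Definition sub_top (T : Type) (O : topology T) (P : T -> Prop)
  : topology {t : T | P t} :=
  fun A => exists U, O U /\ forall s, A s <-> U (proj1_sig s).

Definition prod_top (A B : Type) (OA : topology A) (OB : topology B)
  : topology (A * B) :=
  gen_top (fun S => exists U V, OA U /\ OB V /\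
                      forall p, S p <-> (U (fst p) /\ V (snd p))).

Definition continuous (A B : Type) (OA : topology A) (OB : topology B)
  (f : A -> B) : Prop :=
  forall V, OB V -> OA (fun a => V (f a)).

Definition homeomorphism (A B : Type) (OA : topology A) (OB : topology B)
  (f : A -> B) : Prop :=
  continuous OA OB f /\
  exists g : B -> A, (forall a, g (f a) = a) /\ (forall b, f (g b) = b) /\
                     continuous OB OA g.

Definition image (A B : Type) (f : A -> B) (W : A -> Prop) : B -> Prop :=
  fun b => exists a, W a /\ f a = b.

Definition restrict_image (A B : Type) (f : A -> B) (W : A -> Prop)
  (s : {a : A | W a}) : {b : B | image f W b} :=
  exist _ (f (proj1_sig s)) (ex_intro _ (proj1_sig s) (conj (proj2_sig s) eq_refl)).

Arguments sub_top {T} O P _.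
Arguments restrict_image {A B} f W s.
Arguments image {A B} f W _.

Definition local_homeo (A B : Type) (OA : topology A) (OB : topology B)
  (f : A -> B) : Prop :=
  forall a, exists W, OA W /\ W a /\ OB (image f W) /\
    homeomorphism (sub_top OA W) (sub_top OB (image f W)) (restrict_image f W).

Section PrePseudogroup.
Variables (X : Type) (T : TopSpace X).

(* the objects of X_top: open subsets of X *)
Record Opn := mkOpn { os : X -> Prop; os_open : xopen T os }.

Definition subo (U V : Opn) : Prop := forall x, os U x -> os V x.

Definition Xo : Opn := {| os := fun _ => True; os_open := top_full (xtop T) |}.

(* A small category with object set X_top, containing X_top as a subcategory
   (identity on objects) via the inclusion morphisms [incl]. *)
Record PreCat := {
  hom : Opn -> Opn -> Type;
  cmp : forall U V W : Opn, hom V W -> hom U V -> hom U W;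
  idm : forall U : Opn, hom U U;
  cmp_assoc : forall (U V W Z : Opn) (h : hom W Z) (g : hom V W) (f : hom U V),
      cmp h (cmp g f) = cmp (cmp h g) f;
  cmp_id_l : forall (U V : Opn) (f : hom U V), cmp (idm V) f = f;
  cmp_id_r : forall (U V : Opn) (f : hom U V), cmp f (idm U) = f;
  incl : forall U V : Opn, subo U V -> hom U V;
  incl_id : forall (U : Opn) (H : subo U U), incl H = idm U;
  incl_cmp : forall (U V W : Opn) (H1 : subo U V) (H2 : subo V W) (H3 : subo U W),
      cmp (incl H2) (incl H1) = incl H3
}.

Variable C : PreCat.

(* representatives of germs at x of morphisms into V: f : U -> V with x in U *)
Record GRep (x : X) (V : Opn) := mkG { gU : Opn; gx : os gU x; gf : hom C gU V }.

Definition germ_eq (x : X) (V : Opn) (r r' : GRep x V) : Prop :=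
  exists (W : Opn) (hW : os W x) (H1 : subo W (gU r)) (H2 : subo W (gU r')),
    cmp (gf r) (incl C H1) = cmp (gf r') (incl C H2).

(* C_x(V) = colim_{U ∋ x} C(U,V), as the set of germ classes *)
Definition Germ (x : X) (V : Opn) : Type :=
  { P : GRep x V -> Prop | exists r, forall r', P r' <-> germ_eq r r' }.

Definition germ_of (x : X) (V : Opn) (r : GRep x V) : Germ x V :=
  exist _ (germ_eq r) (ex_intro _ r (fun r' => iff_refl _)).

Definition post (x : X) (V V' : Opn) (H : subo V V') (r : GRep x V) : GRep x V' :=
  @mkG x V' (gU r) (gx r) (cmp (incl C H) (gf r)).

Definition compatible (x y : X) (phi : forall V : Opn, os V y -> Germ x V) : Prop :=
  forall (V V' : Opn) (H : subo V V') (hV : os V y) (hV' : os V' y),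
    exists r : GRep x V, phi V hV = germ_of r /\ phi V' hV' = germ_of (post H r).

(* C_x^y = lim_{V ∋ y} C_x(V) *)
Definition Cxy (x y : X) : Type :=
  { phi : forall V : Opn, os V y -> Germ x V | compatible phi }.

Definition Mor : Type := { x : X & { y : X & Cxy x y } }.

Definition mk_mor (x y : X) (phi : Cxy x y) : Mor := existT _ x (existT _ y phi).
Definition src (e : Mor) : X := projT1 e.
Definition tgt (e : Mor) : X := projT1 (projT2 e).
Definition fam (e : Mor) : forall V : Opn, os V (tgt e) -> Germ (src e) V :=
  proj1_sig (projT2 (projT2 e)).

Arguments fam : clear implicits.

(* composition in C^star: (ψ ∘ φ)_W = germ at x of g ∘ f where g represents ψ_W
   and f represents φ_V (V the domain of g) *)
Definition comp_rel (x y z : X) (phi : Cxy x y) (psi : Cxy y z) (chi : Cxy x z) : Prop :=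
  forall (W : Opn) (hW : os W z),
    exists (V : Opn) (hV : os V y) (g : hom C V W) (U : Opn) (hU : os U x) (f : hom C U V),
      proj1_sig psi W hW = germ_of (@mkG y W V hV g) /\
      proj1_sig phi V hV = germ_of (@mkG x V U hU f) /\
      proj1_sig chi W hW = germ_of (@mkG x W U hU (cmp g f)).

(* e3 = e1 ∘ e2 *)
Definition comp_mor_rel (e1 e2 e3 : Mor) : Prop :=
  exists (x y z : X) (phi : Cxy x y) (psi : Cxy y z) (chi : Cxy x z),
    e2 = mk_mor phi /\ e1 = mk_mor psi /\ e3 = mk_mor chi /\ comp_rel phi psi chi.

Definition is_idfam (x : X) (phi : Cxy x x) : Prop :=
  forall (V : Opn) (h : os V x), proj1_sig phi V h = germ_of (@mkG x V V h (idm C V)).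

Definition is_unit (x : X) (e : Mor) : Prop :=
  exists phi : Cxy x x, e = mk_mor phi /\ is_idfam phi.

Definition inv_rel (e e' : Mor) : Prop :=
  exists i1 i2 : Mor, is_unit (src e) i1 /\ is_unit (tgt e) i2 /\
    comp_mor_rel e' e i1 /\ comp_mor_rel e e' i2.

(* condition (2): ∐_{y ∈ V} C_x^y -> C_x(V), (y,φ) ↦ φ_V, is a bijection *)
Definition pp_cond2 : Prop :=
  forall (x : X) (V : Opn),
    (forall g : Germ x V, exists (y : X) (h : os V y) (phi : Cxy x y),
        proj1_sig phi V h = g) /\
    (forall (y y' : X) (h : os V y) (h' : os V y') (phi : Cxy x y) (phi' : Cxy x y'),
        proj1_sig phi V h = proj1_sig phi' V h' ->
        existT (fun y => Cxy x y) y phi = existT (fun y => Cxy x y) y' phi').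

Definition pp_groupoid : Prop := forall e : Mor, exists e' : Mor, inv_rel e e'.

(* condition (1) holds by construction (objects of C are the opens of X) *)
Definition pre_pseudogroup : Prop := pp_cond2 /\ pp_groupoid.

(* basic open [f,U] = { f_x : x ∈ U }, transported to Mor via e ↦ e_X ∈ C_x(X) *)
Definition basic_set (U : Opn) (f : hom C U Xo) : Mor -> Prop :=
  fun e => exists hx : os U (src e),
    fam e Xo I = germ_of (@mkG (src e) Xo U hx f).

Definition mor_top : topology Mor :=
  gen_top (fun A => exists (U : Opn) (f : hom C U Xo), forall e, A e <-> basic_set f e).

Definition FP : Type := { p : Mor * Mor | src (fst p) = tgt (snd p) }.

Definition fp_top : topology FP :=
  sub_top (prod_top mor_top mor_top) (fun p : Mor * Mor => src (fst p) = tgt (snd p)).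

End PrePseudogroup.

Arguments mor_top {X T} C _.
Arguments fp_top {X T} C _.

(* A morphism of C* from x to y
   is a compatible family (φ_V)_{V ∋ y} of germs at x; by condition (2) it is
   determined by its single component φ_X ∈ C_x(X), and every germ in C_x(V)
   is the V-component of exactly one morphism with target in V.  The whole
   proof consists in reading the groupoid structure off these X-components:

   - the source map restricted to a basic open set [f,U] is a bijection onto
     U whose inverse x ↦ (the morphism with X-component f_x) is continuous,
     because two basic sets [f,U], [g,U'] meet along the open set of points
     where f and g have the same germ; so the source is a local homeomorphism;
   - composition and inversion are computed on representatives: near a
     composable pair, the composite is represented by a fixed g ∘ f, and near
     a morphism represented by b, the inverse is represented by any left
     inverse a of b; hence both maps are continuous, and so are the units;
   - inversion is a continuous involution with t = s ∘ inv, which transfers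
     the local sections of the source to the target. *)

From Stdlib Require Import Classical ClassicalEpsilon FunctionalExtensionality
  PropExtensionality ProofIrrelevance Eqdep.

Set Implicit Arguments.
Unset Strict Implicit.

Lemma pred_ext (A : Type) (P Q : A -> Prop) : (forall a, P a <-> Q a) -> P = Q.
Proof.
  intro H. apply functional_extensionality; intro a.
  apply propositional_extensionality, H.
Qed.

Lemma open_of_local (A : Type) (OA : topology A) (HT : is_topology OA) (S : A -> Prop) :
  (forall a, S a -> exists N, OA N /\ N a /\ forall b, N b -> S b) -> OA S.
Proof.
  intro H.
  replace S with (fun t => exists N, (OA N /\ forall b, N b -> S b) /\ N t).
  - apply (top_union HT). intros N [HN _]; exact HN.
  - apply pred_ext; intro t; split.
    + intros [N [[_ HNS] Nt]]. auto.
    + intro Ht. destruct (H t Ht) as [N [HN [Nt HNS]]]. exists N; auto.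
Qed.

Lemma gen_top_iff (A : Type) (B : topology A) (S : A -> Prop) :
  gen_top B S <-> gen_open B S.
Proof.
  split.
  - intros [S' [HS' E]]. replace S with S'; [exact HS'|].
    apply pred_ext; intro t; symmetry; apply E.
  - intro H. exists S; split; [exact H | tauto].
Qed.

Lemma gen_top_is_topology (A : Type) (B : topology A) : is_topology (gen_top B).
Proof.
  constructor.
  - apply gen_top_iff, go_full.
  - intros S S' H H'. apply gen_top_iff in H, H'. apply gen_top_iff, go_inter; auto.
  - intros F HF. apply gen_top_iff.
    replace (fun t => exists A0, F A0 /\ A0 t)
      with (fun t => exists A0, (fun A1 => gen_open B A1 /\ F A1) A0 /\ A0 t).
    + apply go_union. intros A0 [H _]; exact H.
    + apply pred_ext; intro t; split.
      * intros [A0 [[_ H1] H2]]. eauto.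
      * intros [A0 [H1 H2]]. exists A0. split; [split; [apply gen_top_iff; auto | auto] | auto].
Qed.

Lemma sub_top_is_topology (A : Type) (O : topology A) (P : A -> Prop) :
  is_topology O -> is_topology (sub_top O P).
Proof.
  intro HT. constructor.
  - exists (fun _ => True). split; [apply (top_full HT) | tauto].
  - intros S S' [U [HU EU]] [U' [HU' EU']]. exists (fun t => U t /\ U' t).
    split; [apply (top_inter HT); auto |]. intro s. rewrite EU, EU'. tauto.
  - intros F HF.
    exists (fun t => exists U0,
      (O U0 /\ exists A0, F A0 /\ forall s, A0 s <-> U0 (proj1_sig s)) /\ U0 t).
    split.
    + apply (top_union HT). intros U0 [H _]; exact H.
    + intro s. split.
      * intros [A0 [HA0 A0s]]. destruct (HF A0 HA0) as [U0 [HU0 E]].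
        exists U0. split; [split; [auto | exists A0; auto] | apply E; auto].
      * intros [U0 [[_ [A0 [HA0 E]]] U0s]]. exists A0. split; auto. apply E; auto.
Qed.

Lemma continuous_into_gen (A B : Type) (OA : topology A) (HT : is_topology OA)
  (BB : topology B) (f : A -> B) :
  (forall S, BB S -> forall a, S (f a) ->
     exists N, OA N /\ N a /\ forall b, N b -> S (f b)) ->
  continuous OA (gen_top BB) f.
Proof.
  intros H V HV. apply gen_top_iff in HV. apply open_of_local; auto.
  induction HV as [S HS | | S S' _ IH _ IH' | F HF IH].
  - intros a Ha. apply H; auto.
  - intros a _. exists (fun _ => True). split; [apply (top_full HT) |]. auto.
  - intros a [Ha Ha'].
    destruct (IH a Ha) as [N [HN [Na HNS]]], (IH' a Ha') as [N' [HN' [Na' HNS']]].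
    exists (fun t => N t /\ N' t). split; [apply (top_inter HT); auto |].
    split; auto. intros b [Nb Nb']. auto.
  - intros a [S [HS Sa]]. destruct (IH S HS a Sa) as [N [HN [Na HNS]]].
    exists N. split; auto. split; auto. intros b Nb. exists S. auto.
Qed.

Definition has_local_section (A B : Type) (OA : topology A) (OB : topology B)
  (f : A -> B) (a : A) : Prop :=
  exists (W : A -> Prop) (s : B -> A), OA W /\ W a /\ OB (image f W) /\
    (forall w, W w -> s (f w) = w) /\
    (forall O, OA O -> exists O', OB O' /\
       forall b, image f W b -> (O (s b) <-> O' b)).

Lemma local_homeo_of_sections (A B : Type) (OA : topology A) (OB : topology B)
  (f : A -> B) :
  continuous OA OB f -> (forall a, has_local_section OA OB f a) ->
  local_homeo OA OB f.
Proof.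
  intros Hc H a. destruct (H a) as [W [s [HW [Wa [HI [Hs Hrel]]]]]].
  exists W. split; auto. split; auto. split; auto.
  assert (Ws : forall b, image f W b -> W (s b)) by (intros b [w [Ww <-]]; rewrite Hs; auto).
  assert (fs : forall b, image f W b -> f (s b) = b) by (intros b [w [Ww <-]]; rewrite Hs; auto).
  split.
  - intros V [U [HU EU]]. exists (fun t => U (f t)). split; [apply Hc; auto |].
    intro t. rewrite EU. simpl. tauto.
  - exists (fun b : {b | image f W b} => exist W (s (proj1_sig b)) (Ws _ (proj2_sig b))).
    split; [| split].
    + intros [w Ww]. apply eq_sig_hprop; [intros; apply proof_irrelevance |]. simpl. auto.
    + intros [b Hb]. apply eq_sig_hprop; [intros; apply proof_irrelevance |]. simpl. auto.
    + intros V [U [HU EU]]. destruct (Hrel U HU) as [U' [HU' E']].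
      exists U'. split; auto. intros [b Hb]. rewrite EU. simpl. apply E'; auto.
Qed.

Lemma has_local_section_twist (A B : Type) (OA : topology A) (OB : topology B)
  (f g : A -> B) (i : A -> A) (a : A) :
  continuous OA OA i -> (forall a, i (i a) = a) -> (forall a, g a = f (i a)) ->
  has_local_section OA OB f (i a) -> has_local_section OA OB g a.
Proof.
  intros Hi Hii Hg [W [s [HW [Wa [Him [Hs Hrel]]]]]].
  assert (Eim : image g (fun w => W (i w)) = image f W).
  { apply pred_ext; intro b; split.
    - intros [w [Ww <-]]. exists (i w). rewrite Hg. auto.
    - intros [w [Ww <-]]. exists (i w). rewrite Hg, Hii. auto. }
  exists (fun w => W (i w)), (fun b => i (s b)). rewrite Eim.
  split; [apply Hi, HW |]. split; [exact Wa |]. split; [exact Him |]. split.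
  - intros w Ww. rewrite Hg, Hs; auto.
  - intros O HO. apply (Hrel _ (Hi O HO)).
Qed.

Lemma T1_neighbourhoods_eq (X : Type) (T : TopSpace X) (z z' : X) :
  T1 T -> (forall W, xopen T W -> W z -> W z') -> z = z'.
Proof.
  intros HT1 H. apply NNPP. intro Nzz.
  destruct (HT1 _ _ Nzz) as [W [HW [Wz NWz']]]. exact (NWz' (H W HW Wz)).
Qed.

Section PrePseudogroupGroupoid.
Variables (X : Type) (T : TopSpace X) (C : PreCat T).

Local Notation germ hx f := (germ_of (mkG hx f)).
Local Notation component phi V h := (proj1_sig phi V h).
Local Notation XX := (Xo T).

Definition opn_of (W : X -> Prop) (HW : xopen T W) : Opn T := mkOpn (os := W) HW.

Definition meet (U V : Opn T) : Opn T :=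
  mkOpn (os := fun t => os U t /\ os V t) (top_inter (xtop T) (os_open U) (os_open V)).

Lemma meet_l (U V : Opn T) : subo (meet U V) U.
Proof. intros t [a _]; exact a. Qed.

Lemma subo_X (V : Opn T) : subo V XX.
Proof. intros t _; exact I. Qed.

Definition toX (U V : Opn T) (f : hom C U V) : hom C U XX := cmp (incl C (@subo_X V)) f.

Lemma restrict_twice (U V W W' : Opn T) (f : hom C U V) (H : subo W U)
  (H' : subo W' W) (H'' : subo W' U) :
  cmp (cmp f (incl C H)) (incl C H') = cmp f (incl C H'').
Proof. rewrite <- cmp_assoc, (incl_cmp C H' H H''). reflexivity. Qed.

Lemma germ_eq_refl x V (r : GRep C x V) : germ_eq r r.
Proof. exists (gU r), (gx r), (fun t h => h), (fun t h => h). reflexivity. Qed.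

Lemma germ_eq_sym x V (r r' : GRep C x V) : germ_eq r r' -> germ_eq r' r.
Proof. intros [W [hW [H1 [H2 E]]]]. exists W, hW, H2, H1. auto. Qed.

Lemma germ_eq_trans x V (r1 r2 r3 : GRep C x V) :
  germ_eq r1 r2 -> germ_eq r2 r3 -> germ_eq r1 r3.
Proof.
  intros [W [hW [H1 [H2 E]]]] [W' [hW' [H2' [H3 E']]]].
  set (M := meet W W').
  assert (K : subo M W) by (intros t [a b]; exact a).
  assert (K' : subo M W') by (intros t [a b]; exact b).
  assert (K1 : subo M (gU r1)) by (intros t [a b]; auto).
  assert (K2 : subo M (gU r2)) by (intros t [a b]; auto).
  assert (K3 : subo M (gU r3)) by (intros t [a b]; auto).
  exists M, (conj hW hW'), K1, K3.
  rewrite <- (restrict_twice (gf r1) H1 K K1), E, (restrict_twice (gf r2) H2 K K2).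
  rewrite <- (restrict_twice (gf r2) H2' K' K2), E'. apply restrict_twice.
Qed.

Lemma germ_of_eq x V (r r' : GRep C x V) : germ_of r = germ_of r' <-> germ_eq r r'.
Proof.
  split.
  - intro E. assert (P : proj1_sig (germ_of r') r') by apply germ_eq_refl.
    rewrite <- E in P. exact P.
  - intro H. apply eq_sig_hprop; [intros; apply proof_irrelevance |]. simpl.
    apply pred_ext; intro t; split; intro H'.
    + eapply germ_eq_trans; [apply germ_eq_sym; exact H | exact H'].
    + eapply germ_eq_trans; [exact H | exact H'].
Qed.

Lemma germ_rep x V (g : Germ C x V) : exists r, g = germ_of r.
Proof.
  destruct g as [P [r Hr]]. exists r.
  apply eq_sig_hprop; [intros; apply proof_irrelevance |]. simpl.
  apply pred_ext, Hr.
Qed.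

Lemma germ_postcompose x V V' (h : hom C V V') U U' (hx : os U x) (hx' : os U' x)
  (f : hom C U V) (f' : hom C U' V) :
  germ hx f = germ hx' f' -> germ hx (cmp h f) = germ hx' (cmp h f').
Proof.
  intro E. apply germ_of_eq in E. apply germ_of_eq.
  destruct E as [W [hW [H1 [H2 E]]]]. exists W, hW, H1, H2. simpl in *.
  rewrite <- !cmp_assoc, E. reflexivity.
Qed.

Lemma germ_restrict x V U U' (hx : os U x) (hx' : os U' x) (f : hom C U V)
  (H : subo U' U) :
  germ hx f = germ hx' (cmp f (incl C H)).
Proof.
  apply germ_of_eq. exists U', hx', H, (fun t h => h). simpl.
  rewrite incl_id, cmp_id_r. reflexivity.
Qed.

Lemma germ_pi x V U (hx hx' : os U x) (f : hom C U V) : germ hx f = germ hx' f.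
Proof. rewrite (proof_irrelevance _ hx hx'). reflexivity. Qed.

Lemma germ_eq_nearby x V U U' (hx : os U x) (hx' : os U' x)
  (f : hom C U V) (f' : hom C U' V) :
  germ hx f = germ hx' f' ->
  exists W : Opn T, os W x /\ subo W U /\ subo W U' /\
    forall x0 (h : os U x0) (h' : os U' x0), os W x0 -> germ h f = germ h' f'.
Proof.
  intro E. apply germ_of_eq in E. destruct E as [W [hW [H1 [H2 E]]]].
  exists W. split; auto. split; auto. split; auto.
  intros x0 h h' hw. apply germ_of_eq. exists W, hw, H1, H2. exact E.
Qed.

Lemma component_post x y (phi : Cxy C x y) V V' (H : subo V V') (hV : os V y)
  (hV' : os V' y) (r : GRep C x V) :
  component phi V hV = germ_of r -> component phi V' hV' = germ_of (post H r).
Proof.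
  intro E. destruct (proj2_sig phi V V' H hV hV') as [r0 [E1 E2]].
  rewrite E2. rewrite E in E1.
  destruct r as [U hx f], r0 as [U0 hx0 f0]. apply germ_postcompose. symmetry. exact E1.
Qed.

Lemma component_toX x y (phi : Cxy C x y) V (hV : os V y) U (hU : os U x)
  (f : hom C U V) :
  component phi V hV = germ hU f -> component phi XX I = germ hU (toX f).
Proof. apply component_post. Qed.

Lemma component_pi x y (phi : Cxy C x y) V (h h' : os V y) :
  component phi V h = component phi V h'.
Proof. rewrite (proof_irrelevance _ h h'). reflexivity. Qed.

Ltac simpl_mor := unfold fam, src, tgt in *; cbn in *.

Ltac invert_mor_eq E := unfold mk_mor in E;
  let E1 := fresh "E" in pose proof (f_equal (@projT1 _ _) E) as E1; cbn in E1; subst;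
  apply inj_pair2 in E;
  let E2 := fresh "E" in pose proof (f_equal (@projT1 _ _) E) as E2; cbn in E2; subst;
  apply inj_pair2 in E; subst.

Definition idfam (x : X) : forall V : Opn T, os V x -> Germ C x V :=
  fun V h => germ h (idm C V).
Arguments idfam : clear implicits.

Lemma idfam_compatible (x : X) : compatible (idfam x).
Proof.
  intros V V' H hV hV'. exists (mkG hV (idm C V)). split; [reflexivity |].
  unfold idfam, post. apply germ_of_eq. exists V, hV, H, (fun t h => h). simpl.
  rewrite incl_id, !cmp_id_r, cmp_id_l. reflexivity.
Qed.

Definition unit_mor (x : X) : Cxy C x x := exist _ (idfam x) (@idfam_compatible x).
Arguments unit_mor : clear implicits.

Lemma unit_mor_is_unit (x : X) : is_unit x (mk_mor (unit_mor x)).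
Proof. exists (unit_mor x). split; [reflexivity |]. intros V h. reflexivity. Qed.

Lemma comp_germ_wd x y z (phi : Cxy C x y) (psi : Cxy C y z) W (hW : os W z)
  V1 (hV1 : os V1 y) (g1 : hom C V1 W) U1 (hU1 : os U1 x) (f1 : hom C U1 V1)
  V2 (hV2 : os V2 y) (g2 : hom C V2 W) U2 (hU2 : os U2 x) (f2 : hom C U2 V2) :
  component psi W hW = germ hV1 g1 -> component phi V1 hV1 = germ hU1 f1 ->
  component psi W hW = germ hV2 g2 -> component phi V2 hV2 = germ hU2 f2 ->
  germ hU1 (cmp g1 f1) = germ hU2 (cmp g2 f2).
Proof.
  intros E1 F1 E2 F2. rewrite E1 in E2. apply germ_of_eq in E2.
  destruct E2 as [N [hN [K1 [K2 EN]]]]. simpl in *.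
  destruct (germ_rep (component phi N hN)) as [[U hU f] Ef].
  pose proof (component_post K1 hV1 Ef) as P1. rewrite F1 in P1.
  pose proof (component_post K2 hV2 Ef) as P2. rewrite F2 in P2.
  unfold post in P1, P2. simpl in P1, P2.
  rewrite (germ_postcompose g1 P1), (germ_postcompose g2 P2), !cmp_assoc, EN.
  reflexivity.
Qed.

Lemma comp_rel_component x y z (phi : Cxy C x y) (psi : Cxy C y z) (chi : Cxy C x z) :
  comp_rel phi psi chi ->
  forall W (hW : os W z) V (hV : os V y) (g : hom C V W) U (hU : os U x) (f : hom C U V),
  component psi W hW = germ hV g -> component phi V hV = germ hU f ->
  component chi W hW = germ hU (cmp g f).
Proof.
  intros Hc W hW V hV g U hU f E F.
  destruct (Hc W hW) as [V' [hV' [g' [U' [hU' [f' [E' [F' Ch]]]]]]]].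
  rewrite Ch. exact (comp_germ_wd E' F' E F).
Qed.

Lemma inv_rel_spec x y (phi : Cxy C x y) e' : inv_rel (mk_mor phi) e' ->
  exists (p : Cxy C y x) (c1 : Cxy C x x) (c2 : Cxy C y y),
    e' = mk_mor p /\ comp_rel phi p c1 /\ is_idfam c1 /\ comp_rel p phi c2 /\ is_idfam c2.
Proof.
  intros [i1 [i2 [[u1 [Ei1 Hu1]] [[u2 [Ei2 Hu2]] [C1 C2]]]]].
  change (src (mk_mor phi)) with x in *. change (tgt (mk_mor phi)) with y in *.
  destruct C1 as [x1 [y1 [z1 [ph [ps [ch [Ea [Eb [Ec Hc]]]]]]]]].
  destruct C2 as [x2 [y2 [z2 [ph2 [ps2 [ch2 [Ea2 [Eb2 [Ec2 Hc2]]]]]]]]].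
  subst.
  invert_mor_eq Ea. invert_mor_eq Eb2. invert_mor_eq Ea2.
  invert_mor_eq Ec. invert_mor_eq Ec2.
  exists ph2, ch, ch2. repeat split; auto.
Qed.

Lemma right_inverse_component x y (q : Cxy C x y) (p : Cxy C y x) (c : Cxy C y y)
  (V W : Opn T) (hy : os V y) (hx : os W x) (b : hom C W V) (a : hom C V XX)
  (K : subo W XX) :
  comp_rel p q c -> is_idfam c -> component q V hy = germ hx b ->
  cmp a b = incl C K -> component p XX I = germ hy a.
Proof.
  intros Hc Hid Eq Hab.
  destruct (germ_rep (component p W hx)) as [[P hP r] Er].
  pose proof (comp_rel_component Hc Eq Er) as Cc. rewrite Hid in Cc. simpl in Cc.
  pose proof (germ_postcompose a Cc) as Cd. rewrite cmp_id_r, cmp_assoc, Hab in Cd.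
  rewrite (component_post K I Er). unfold post. simpl. rewrite Cd. reflexivity.
Qed.

Lemma mor_top_is_topology : is_topology (mor_top C).
Proof. apply gen_top_is_topology. Qed.

Lemma basic_open U (f : hom C U XX) : mor_top C (basic_set f).
Proof. apply gen_top_iff, go_basic. exists U, f. tauto. Qed.

Definition agree_set U U' (f : hom C U XX) (g : hom C U' XX) : X -> Prop :=
  fun x => exists (h1 : os U x) (h2 : os U' x), germ h1 f = germ h2 g.

Lemma agree_set_open U U' (f : hom C U XX) (g : hom C U' XX) : xopen T (agree_set f g).
Proof.
  apply open_of_local; [apply xtop |]. intros x [h1 [h2 E]].
  destruct (germ_eq_nearby E) as [W [hW [K1 [K2 HN]]]].
  exists (os W). split; [apply os_open |]. split; [exact hW |].
  intros b Wb. exists (K1 b Wb), (K2 b Wb). apply HN; auto.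
Qed.

Lemma basic_set_iff U U' (f : hom C U XX) (g : hom C U' XX) e :
  basic_set f e -> (basic_set g e <-> agree_set f g (src e)).
Proof.
  destruct e as [x [y p]]. intros [h1 E1]. simpl_mor. split.
  - intros [h2 E2]. exists h1, h2. simpl_mor. rewrite <- E1, <- E2. reflexivity.
  - intros [h1' [h2 E]]. exists h2. simpl_mor. rewrite E1, <- E. apply germ_pi.
Qed.

(* The unit map is continuous: if 1_x lies in [g,U] then g agrees with
   the identity near x, so 1_x' lies in [g,U] for all x' near x. *)
Lemma unit_continuous (u : X -> Mor C) :
  (forall x, is_unit x (u x)) -> continuous (xopen T) (mor_top C) u.
Proof.
  intro Hu. apply continuous_into_gen; [apply xtop |].
  intros S [Ug [g HS]] x Hx. rewrite HS in Hx.
  destruct (Hu x) as [ph [Eu Hid]]. rewrite Eu in Hx. destruct Hx as [hg Eg]. simpl_mor.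
  rewrite Hid in Eg. destruct (germ_eq_nearby Eg) as [W [hW [K1 [K2 HN]]]].
  exists (os W). split; [apply os_open |]. split; [exact hW |]. intros b Wb.
  rewrite HS. destruct (Hu b) as [ph' [Eu' Hid']]. rewrite Eu'. exists (K2 b Wb).
  simpl_mor. rewrite Hid'. apply HN; auto.
Qed.

Section Condition2.
Hypothesis HC2 : pp_cond2 C.

Lemma germ_is_component x V (g : Germ C x V) :
  exists y (h : os V y) (phi : Cxy C x y), component phi V h = g.
Proof. exact (proj1 (HC2 x V) g). Qed.

Lemma component_inj x y y' (phi : Cxy C x y) (phi' : Cxy C x y') V h h' :
  component phi V h = component phi' V h' ->
  y = y' /\ forall W k k', component phi W k = component phi' W k'.
Proof.
  intro E. pose proof (proj2 (HC2 x V) y y' h h' phi phi' E) as E'.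
  pose proof (f_equal (@projT1 _ _) E') as Ey. simpl in Ey. subst y'.
  apply inj_pair2 in E'. subst phi'. split; [reflexivity |]. intros. apply component_pi.
Qed.

Lemma mor_ext x y y' (phi : Cxy C x y) (phi' : Cxy C x y') :
  component phi XX I = component phi' XX I -> mk_mor phi = mk_mor phi'.
Proof. intro E. unfold mk_mor. f_equal. exact (proj2 (HC2 x XX) y y' I I phi phi' E). Qed.

Lemma target_in_domain x y (phi : Cxy C x y) V U (hx : os U x) (g : hom C U V) :
  component phi XX I = germ hx (toX g) ->
  exists hy : os V y, component phi V hy = germ hx g.
Proof.
  intro E. destruct (germ_is_component (germ hx g)) as [y' [hy' [ch Ech]]].
  assert (E2 : component ch XX I = component phi XX I)
    by (rewrite E; exact (component_toX Ech)).
  destruct (component_inj E2) as [Ey Eall]. subst y'.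
  exists hy'. rewrite <- Ech. symmetry. apply Eall.
Qed.

Lemma comp_X_component x y z (phi : Cxy C x y) (psi : Cxy C y z) (chi : Cxy C x z)
  V (hV : os V y) (g : hom C V XX) U (hU : os U x) (f : hom C U V) :
  comp_rel phi psi chi -> component psi XX I = germ hV g ->
  component phi XX I = germ hU (toX f) -> component chi XX I = germ hU (cmp g f).
Proof.
  intros Hc Eg Ef. destruct (target_in_domain Ef) as [hy Ef'].
  rewrite (component_pi phi hy hV) in Ef'. exact (comp_rel_component Hc Eg Ef').
Qed.

Lemma comp_candidate x y z z' (phi : Cxy C x y) (psi : Cxy C y z) (chi : Cxy C x z')
  V (hV : os V y) (g : hom C V XX) U (hU : os U x) (f : hom C U V) :
  component psi XX I = germ hV g -> component phi V hV = germ hU f ->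
  component chi XX I = germ hU (cmp g f) ->
  forall W (hW : os W z), exists V1 (hV1 : os V1 y) (g1 : hom C V1 W) U1
    (hU1 : os U1 x) (f1 : hom C U1 V1),
    component psi W hW = germ hV1 g1 /\ component phi V1 hV1 = germ hU1 f1 /\
    exists hw : os W z', component chi W hw = germ hU1 (cmp g1 f1).
Proof.
  intros Eg Ef Echi W hW.
  destruct (germ_rep (component psi W hW)) as [[V1 hV1 g1] Eg1].
  destruct (germ_rep (component phi V1 hV1)) as [[U1 hU1 f1] Ef1].
  exists V1, hV1, g1, U1, hU1, f1. split; [exact Eg1 |]. split; [exact Ef1 |].
  destruct (germ_is_component (germ hU1 (cmp g1 f1))) as [z'' [hz'' [ch Ech]]].
  pose proof (component_toX Ech) as P1.
  pose proof (component_toX Eg1) as P2.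
  pose proof (comp_germ_wd P2 Ef1 Eg Ef) as P3.
  unfold toX in P1, P3. rewrite <- cmp_assoc in P3. rewrite P3, <- Echi in P1.
  destruct (component_inj P1) as [Ez Eall]. subst z''.
  exists hz''. rewrite <- Ech. symmetry. apply Eall.
Qed.

(* Composites exist in C*; T1 forces the candidate to have target z. *)
Lemma comp_exists x y z (phi : Cxy C x y) (psi : Cxy C y z) :
  T1 T -> exists chi : Cxy C x z, comp_rel phi psi chi.
Proof.
  intro HT1.
  destruct (germ_rep (component psi XX I)) as [[V hV g] Eg].
  destruct (germ_rep (component phi V hV)) as [[U hU f] Ef].
  destruct (germ_is_component (germ hU (cmp g f))) as [z' [hz' [chi Echi]]].
  rewrite (component_pi chi hz' I) in Echi.
  pose proof (comp_candidate Eg Ef Echi) as Hcand.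
  assert (Ez : z = z').
  { apply (T1_neighbourhoods_eq HT1). intros W HW Wz.
    destruct (Hcand (opn_of HW) Wz) as [V1 [_ [_ [U1 [_ [_ [_ [_ [hw _]]]]]]]]].
    exact hw. }
  subst z'. exists chi. intros W hW.
  destruct (Hcand W hW) as [V1 [hV1 [g1 [U1 [hU1 [f1 [A1 [A2 [hw A3]]]]]]]]].
  exists V1, hV1, g1, U1, hU1, f1. repeat split; auto.
  rewrite (component_pi chi hW hw). exact A3.
Qed.

(* s is continuous: [f restricted to U ∩ O] is a neighbourhood of φ
   mapped into O. *)
Lemma source_continuous : continuous (mor_top C) (xopen T) (@src X T C).
Proof.
  intros O HO. apply open_of_local; [apply mor_top_is_topology |]. intros e He.
  destruct e as [x [y phi]]. simpl_mor.
  destruct (germ_rep (component phi XX I)) as [[U hU f] Ef].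
  exists (basic_set (cmp f (incl C (@meet_l U (opn_of HO))))).
  split; [apply basic_open |]. split.
  - exists (conj hU He). simpl_mor. rewrite Ef. apply germ_restrict.
  - intros e' [hx _]. exact (proj2 hx).
Qed.

(* t is continuous: if φ_O is represented by g, then [g as a map into X]
   contains φ and only morphisms with target in O. *)
Lemma target_continuous : continuous (mor_top C) (xopen T) (@tgt X T C).
Proof.
  intros O HO. apply open_of_local; [apply mor_top_is_topology |]. intros e He.
  destruct e as [x [y phi]]. simpl_mor.
  destruct (germ_rep (component phi (opn_of HO) He)) as [[U hU g] Eg].
  exists (basic_set (toX g)). split; [apply basic_open |]. split.
  - exists hU. simpl_mor. exact (component_toX Eg).
  - intros [x' [y' phi']] [hx E']. simpl_mor.
    destruct (target_in_domain E') as [hy _]. exact hy.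
Qed.

Lemma basic_set_inj U (f : hom C U XX) e1 e2 :
  basic_set f e1 -> basic_set f e2 -> src e1 = src e2 -> e1 = e2.
Proof.
  destruct e1 as [x1 [y1 p1]], e2 as [x2 [y2 p2]]. intros [h1 E1] [h2 E2] Ex. simpl_mor.
  subst x2. apply mor_ext. rewrite E1, E2. apply germ_pi.
Qed.

Lemma basic_section U (f : hom C U XX) :
  exists s : X -> Mor C, forall x, os U x -> basic_set f (s x) /\ src (s x) = x.
Proof.
  apply (choice (fun x e => os U x -> basic_set f e /\ src e = x)). intro x.
  destruct (classic (os U x)) as [h | n].
  - destruct (germ_is_component (germ h f)) as [y [hy [phi E]]].
    exists (mk_mor phi). intros _. split; [| reflexivity].
    exists h. simpl_mor. rewrite (@component_pi x y phi XX I hy). exact E.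
  - exists (mk_mor (unit_mor x)). intro; contradiction.
Qed.

Lemma basic_section_continuous U (f : hom C U XX) (s : X -> Mor C) :
  (forall x, os U x -> basic_set f (s x) /\ src (s x) = x) ->
  forall O, mor_top C O -> exists O', xopen T O' /\ forall x, os U x -> (O (s x) <-> O' x).
Proof.
  intros Hs O HO. apply gen_top_iff in HO.
  induction HO as [S HS | | S S' _ IH _ IH' | F HF IH].
  - destruct HS as [U' [g HSg]]. exists (agree_set f g). split; [apply agree_set_open |].
    intros x hx. rewrite HSg. destruct (Hs x hx) as [B Es].
    rewrite (basic_set_iff g B), Es. tauto.
  - exists (fun _ => True). split; [apply (top_full (xtop T)) |]. tauto.
  - destruct IH as [O1 [HO1 E1]], IH' as [O2 [HO2 E2]].
    exists (fun t => O1 t /\ O2 t). split; [apply (top_inter (xtop T)); auto |].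
    intros x hx. rewrite (E1 x hx), (E2 x hx). tauto.
  - exists (fun x => exists B, (xopen T B /\ exists A, F A /\
                      forall x, os U x -> (A (s x) <-> B x)) /\ B x).
    split; [apply (top_union (xtop T)); intros B [HB _]; exact HB |].
    intros x hx. split.
    + intros [A [FA As]]. destruct (IH A FA) as [B [HB EB]].
      exists B. split; [split; [auto | exists A; auto] | apply EB; auto].
    + intros [B [[_ [A [FA EA]]] Bx]]. exists A. split; auto. apply EA; auto.
Qed.

(* [f,U] around φ, with the section over U, is a local section of s. *)
Lemma source_local_section e : has_local_section (mor_top C) (xopen T) (@src X T C) e.
Proof.
  destruct e as [x [y phi]].
  destruct (germ_rep (component phi XX I)) as [[U hU f] Ef].
  destruct (basic_section f) as [s Hs].
  assert (Eim : image (@src X T C) (basic_set f) = os U).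
  { apply pred_ext; intro b; split.
    - intros [a [[hx _] <-]]. exact hx.
    - intro hb. exists (s b). split; apply (Hs b hb). }
  exists (basic_set f), s. rewrite Eim.
  split; [apply basic_open |]. split; [exists hU; exact Ef |].
  split; [apply os_open |]. split.
  - intros w [hw Ew].
    apply basic_set_inj with (f := f); [apply (Hs _ hw) | exists hw; exact Ew | apply (Hs _ hw)].
  - intros O HO. exact (basic_section_continuous Hs HO).
Qed.

Lemma source_local_homeo : local_homeo (mor_top C) (xopen T) (@src X T C).
Proof. exact (local_homeo_of_sections source_continuous source_local_section). Qed.

(* Near a composable pair the composite stays in a basic open set [k,U]:
   if ψ ∘ φ has germ k_x and g, f represent ψ and φ, then g ∘ f = k near x,
   and every pair in [g] × [f near x] composes into [k]. *)
Lemma comp_locally (m : FP C -> Mor C)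
  (Hm : forall p, comp_mor_rel (fst (proj1_sig p)) (snd (proj1_sig p)) (m p))
  Uk (k : hom C Uk XX) P0 :
  basic_set k (m P0) -> exists N, fp_top C N /\ N P0 /\ forall P, N P -> basic_set k (m P).
Proof.
  intro HP0.
  destruct (Hm P0) as [x [y [z [phi [psi [chi [E2 [E1 [E3 Hc]]]]]]]]].
  rewrite E3 in HP0. destruct HP0 as [hk Ek]. unfold fam in Ek; cbn in Ek.
  destruct (germ_rep (component psi XX I)) as [[V hV g] Eg].
  destruct (germ_rep (component phi V hV)) as [[U hU f] Ef].
  rewrite (comp_X_component Hc Eg (component_toX Ef)) in Ek.
  apply germ_of_eq in Ek. destruct Ek as [W0 [hW0 [K1 [K2 EW]]]]. simpl in *.
  set (f' := cmp f (incl C K1)).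
  exists (fun P : FP C => basic_set g (fst (proj1_sig P)) /\
                          basic_set (toX f') (snd (proj1_sig P))).
  split; [| split].
  - exists (fun pr => basic_set g (fst pr) /\ basic_set (toX f') (snd pr)).
    split; [| tauto]. apply gen_top_iff, go_basic.
    exists (basic_set g), (basic_set (toX f')).
    split; [apply basic_open |]. split; [apply basic_open | tauto].
  - cbv beta. rewrite E1, E2. split; [exists hV; exact Eg |].
    exists hW0. simpl_mor. rewrite (component_toX Ef), (germ_restrict hU hW0 _ K1).
    unfold toX, f'. rewrite cmp_assoc. reflexivity.
  - intros P [B1 B2].
    destruct (Hm P) as [x' [y' [z' [phi' [psi' [chi' [E2' [E1' [E3' Hc']]]]]]]]].
    rewrite E3'. rewrite E1' in B1. rewrite E2' in B2.
    destruct B1 as [hy' Eg']. destruct B2 as [hx' Ef']. simpl_mor.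
    exists (K2 x' hx'). simpl_mor. rewrite (comp_X_component Hc' Eg' Ef').
    unfold f'. rewrite cmp_assoc, EW. symmetry. apply germ_restrict.
Qed.

Lemma comp_continuous (m : FP C -> Mor C) :
  (forall p, comp_mor_rel (fst (proj1_sig p)) (snd (proj1_sig p)) (m p)) ->
  continuous (fp_top C) (mor_top C) m.
Proof.
  intro Hm. apply continuous_into_gen; [apply sub_top_is_topology, gen_top_is_topology |].
  intros S [Uk [k HS]] P0 HP0. rewrite HS in HP0.
  destruct (comp_locally Hm HP0) as [N [HN [NP0 HNk]]].
  exists N. split; [exact HN |]. split; [exact NP0 |]. intros P NP. rewrite HS. auto.
Qed.

Section Inversion.
Variable i : Mor C -> Mor C.
Hypothesis Hi : forall e, inv_rel e (i e).

(* Near φ the inverse stays in a basic open set [g]: if φ is represented on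
   V by b and a ∘ b = incl near the source, then every morphism near φ
   represented by b has an inverse represented by a, and a agrees with g
   near the target. *)
Lemma inv_locally U (g : hom C U XX) e :
  basic_set g (i e) -> exists N, mor_top C N /\ N e /\ forall e', N e' -> basic_set g (i e').
Proof.
  destruct e as [x [y phi]]. change (existT _ x (existT _ y phi)) with (mk_mor phi).
  destruct (inv_rel_spec (Hi (mk_mor phi))) as [p [c1 [c2 [Ep [Hc1 [Hid1 [Hc2 Hid2]]]]]]].
  rewrite Ep. intros [hy Eg]. simpl_mor.
  destruct (Hc1 XX I) as [V [hV [a [W [hW [b [Ea [Eb Ec]]]]]]]].
  rewrite Hid1 in Ec. symmetry in Ec. apply germ_of_eq in Ec.
  destruct Ec as [W0 [hW0 [K1 [K2 EW]]]]. simpl in *. rewrite cmp_id_l in EW.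
  rewrite Ea in Eg. apply germ_of_eq in Eg. destruct Eg as [W1 [hW1 [L1 [L2 EL]]]]. simpl in *.
  set (b' := cmp b (incl C K1)).
  assert (Hab : cmp a b' = incl C K2) by (unfold b'; rewrite cmp_assoc; exact EW).
  exists (fun e => basic_set (toX b') e /\ os W1 (tgt e)). split; [| split].
  - apply (top_inter mor_top_is_topology); [apply basic_open |].
    apply target_continuous, os_open.
  - split; [| exact hW1]. exists hW0. simpl_mor.
    rewrite (component_toX Eb), (germ_restrict hW hW0 _ K1).
    unfold toX, b'. rewrite cmp_assoc. reflexivity.
  - intros [x' [y' q]] [[hx' Eq] hW1']. simpl_mor.
    change (existT _ x' (existT _ y' q)) with (mk_mor q).
    destruct (target_in_domain Eq) as [hy' Eq2].
    destruct (inv_rel_spec (Hi (mk_mor q))) as [p' [c1' [c2' [Ep' [_ [_ [Hc2' Hid2']]]]]]].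
    rewrite Ep'. exists (L2 y' hW1'). simpl_mor.
    rewrite (right_inverse_component Hc2' Hid2' Eq2 Hab).
    apply germ_of_eq. exists W1, hW1', L1, L2. exact EL.
Qed.

Lemma inv_continuous : continuous (mor_top C) (mor_top C) i.
Proof.
  apply continuous_into_gen; [apply mor_top_is_topology |].
  intros S [Ug [g HS]] e He. rewrite HS in He.
  destruct (inv_locally He) as [N [HN [Ne HNg]]].
  exists N. split; [exact HN |]. split; [exact Ne |]. intros e' Ne'. rewrite HS. auto.
Qed.

(* Write p = i φ.  Since φ ∘ p is a unit, the
   representatives b of p_V and a of φ_X satisfy a ∘ b = incl near y; and
   i p is a right inverse of p, so its X-component is also represented by a. *)
Lemma inv_involutive e : i (i e) = e.
Proof.
  destruct e as [x [y phi]]. change (existT _ x (existT _ y phi)) with (mk_mor phi).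
  destruct (inv_rel_spec (Hi (mk_mor phi))) as [p [_ [c2 [Ep [_ [_ [Hc2 Hid2]]]]]]].
  rewrite Ep.
  destruct (inv_rel_spec (Hi (mk_mor p))) as [q [_ [c2' [Eq [_ [_ [Hc2' Hid2']]]]]]].
  rewrite Eq. apply mor_ext.
  destruct (Hc2 XX I) as [V [hV [a [W [hW [b [Ea [Eb Ec]]]]]]]].
  rewrite Hid2 in Ec. symmetry in Ec. apply germ_of_eq in Ec.
  destruct Ec as [W0 [hW0 [K1 [K2 EW]]]]. simpl in *. rewrite cmp_id_l in EW.
  assert (Hab : cmp a (cmp b (incl C K1)) = incl C K2) by (rewrite cmp_assoc; exact EW).
  rewrite (germ_restrict hW hW0 _ K1) in Eb.
  rewrite (right_inverse_component Hc2' Hid2' Eb Hab). symmetry. exact Ea.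
Qed.

Lemma target_eq_source_inv e : tgt e = src (i e).
Proof.
  destruct e as [x [y phi]]. change (existT _ x (existT _ y phi)) with (mk_mor phi).
  destruct (inv_rel_spec (Hi (mk_mor phi))) as [p [_ [_ [Ep _]]]]. rewrite Ep. reflexivity.
Qed.

(* t = s ∘ i with i a continuous involution, so t is a local homeomorphism. *)
Lemma target_local_homeo : local_homeo (mor_top C) (xopen T) (@tgt X T C).
Proof.
  apply (local_homeo_of_sections target_continuous). intro e.
  apply (has_local_section_twist inv_continuous inv_involutive target_eq_source_inv).
  apply source_local_section.
Qed.

End Inversion.
End Condition2.
End PrePseudogroupGroupoid.

Lemma comp_function_exists (X : Type) (T : TopSpace X) (C : PreCat T) :
  T1 T -> pp_cond2 C -> exists m : FP C -> Mor C,
    forall p, comp_mor_rel (fst (proj1_sig p)) (snd (proj1_sig p)) (m p).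
Proof.
  intros HT1 HC2.
  apply (choice (fun p e => comp_mor_rel (fst (proj1_sig p)) (snd (proj1_sig p)) e)).
  intros [[[y0 [z psi]] [x [y phi]]] Hs]. cbn in Hs |- *. subst y0.
  destruct (comp_exists HC2 phi psi HT1) as [chi Hc].
  exists (mk_mor chi), x, y, z, phi, psi, chi. repeat split; auto.
Qed.

Theorem mainTheorem4 (X : Type) (T : TopSpace X) (C : PreCat T) :
  T1 T -> pre_pseudogroup C ->
  local_homeo (mor_top C) (xopen T) (@src X T C) /\
  local_homeo (mor_top C) (xopen T) (@tgt X T C) /\
  ((exists u : X -> Mor C, forall x, is_unit x (u x)) /\
   (forall u : X -> Mor C, (forall x, is_unit x (u x)) ->
      continuous (xopen T) (mor_top C) u)) /\
  ((exists i : Mor C -> Mor C, forall e, inv_rel e (i e)) /\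
   (forall i : Mor C -> Mor C, (forall e, inv_rel e (i e)) ->
      continuous (mor_top C) (mor_top C) i)) /\
  ((exists m : FP C -> Mor C,
      forall p, comp_mor_rel (fst (proj1_sig p)) (snd (proj1_sig p)) (m p)) /\
   (forall m : FP C -> Mor C,
      (forall p, comp_mor_rel (fst (proj1_sig p)) (snd (proj1_sig p)) (m p)) ->
      continuous (fp_top C) (mor_top C) m)).
Proof.
  intros HT1 [HC2 HG].
  destruct (choice _ HG) as [i Hi].
  split; [exact (source_local_homeo HC2) |].
  split; [exact (target_local_homeo HC2 Hi) |].
  split; [split |].
  { exists (fun x => mk_mor (unit_mor C x)). intro x. apply unit_mor_is_unit. }
  { exact (@unit_continuous X T C). }
  split; [split |].
  { exists i; exact Hi. }
  { intros i' Hi'. exact (inv_continuous HC2 Hi'). }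
  split.
  { exact (comp_function_exists HT1 HC2). }
  { intros m Hm. exact (comp_continuous HC2 Hm). }
Qed.
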